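(* Let $\Phi$ be a finite crystallographic root system with simple roots $\Delta$ and Weyl group $W$, let $\Gamma\subseteq\Delta$ with parabolic subgroup $W_\Gamma$, and let $\beta\in\Phi^+_\Gamma$. Then the random variable $\mathcal{X}_\beta$ is the same when considered on $W$ as when considered on $W_\Gamma$, i.e. \[ \frac{|\{w\in W: w(\beta)\in\Phi^-\}|}{|W|}=\frac{|\{w\in W_\Gamma: w(\beta)\in\Phi^-\}|}{|W_\Gamma|}. \]
   Context: $\Phi^+$ are the positive roots and $\Phi^-=-\Phi^+$. $W_\Gamma=\langle s_\alpha:\alpha\in\Gamma\rangle$ and $\Phi^+_\Gamma=\Phi^+\cap\operatorname{span}(\Gamma)$. For a group $G\in\{W,W_\Gamma\}$ with the uniform distribution, $\mathcal{X}_\beta$ is the Bernoulli random variable with $\mathcal{X}_\beta(w)=1$ if $w(\beta)\in\Phi^-$ and $0$ otherwise. *)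

From HB Require Import structures.
From mathcomp Require Import all_boot all_order all_algebra.
From mathcomp Require Import boolp.
Set Implicit Arguments. Unset Strict Implicit. Unset Printing Implicit Defensive.
Import Order.TTheory GRing.Theory Num.Theory.
Local Open Scope ring_scope.

Definition dot (R : realFieldType) (n : nat) (u v : 'rV[R]_n) : R :=
  (u *m v^T) 0 0.

(* matrix of the orthogonal reflection s_a (acting on row vectors: v *m M) :
   v |-> v - (2 <v,a>/<a,a>) a *)
Definition refl_mx (R : realFieldType) (n : nat) (a : 'rV[R]_n) : 'M[R]_n :=
  1%:M - (2 / dot a a) *: (a^T *m a).

Definition is_root_system (R : realFieldType) (n : nat) (Phi : seq 'rV[R]_n)
  : Prop :=
  [/\ 0 \notin Phi,
      (<<Phi>>%VS = fullv),
      (forall a b, a \in Phi -> b \in Phi -> b *m refl_mx a \in Phi),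
      (forall a b, a \in Phi -> b \in Phi ->
         exists z : int, 2 * dot b a / dot a a = z%:~R) &
      (forall a (c : R), a \in Phi -> c *: a \in Phi -> c = 1 \/ c = -1)].

Definition nonneg_int_comb (R : realFieldType) (n : nat)
  (Delta : seq 'rV[R]_n) (v : 'rV[R]_n) : Prop :=
  exists c : 'I_(size Delta) -> nat,
    v = \sum_(i < size Delta) (c i)%:R *: Delta`_i.

Definition is_simple_system (R : realFieldType) (n : nat)
  (Phi Delta : seq 'rV[R]_n) : Prop :=
  [/\ {subset Delta <= Phi}, free Delta &
      (forall a, a \in Phi ->
         nonneg_int_comb Delta a \/ nonneg_int_comb Delta (- a))].

Definition pos_root (R : realFieldType) (n : nat)
  (Phi Delta : seq 'rV[R]_n) (v : 'rV[R]_n) : Prop :=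
  v \in Phi /\ nonneg_int_comb Delta v.

Definition neg_root (R : realFieldType) (n : nat)
  (Phi Delta : seq 'rV[R]_n) (v : 'rV[R]_n) : Prop :=
  pos_root Phi Delta (- v).

(* the group generated by the reflections s_a, a in S
   (the monoid closure equals the group closure since s_a are involutions) *)
Inductive gen_refl (R : realFieldType) (n : nat) (S : seq 'rV[R]_n)
  : 'M[R]_n -> Prop :=
| gen_refl1 : gen_refl S 1%:M
| gen_reflM : forall a M, a \in S -> gen_refl S M ->
    gen_refl S (M *m refl_mx a).

(* empirical probability that w(beta) is a negative root, w uniform in the
   group enumerated (without repetition) by sG *)
Definition prob_neg (R : realFieldType) (n : nat)
  (Phi Delta : seq 'rV[R]_n) (beta : 'rV[R]_n) (sG : seq 'M[R]_n) : R :=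
  (count (fun M => `[< neg_root Phi Delta (beta *m M) >]) sG)%:R
    / (size sG)%:R.

From HB Require Import structures.
From mathcomp Require Import all_boot all_order all_algebra.
From mathcomp Require Import boolp.
From mathcomp.algebra_tactics Require Import ring.
Set Implicit Arguments.
Unset Strict Implicit.
Unset Printing Implicit Defensive.
Import Order.TTheory GRing.Theory Num.Theory.
Local Open Scope ring_scope.

(* Both probabilities equal 1/2.  If a root a lies in S and G is the group
   generated by the reflections in S, left multiplication by s_a permutes G
   and turns w(a) into -w(a), so exactly half of G sends a to a negative
   root.  This applies to beta in W.  In W_Gamma it applies to the simple
   roots of Gamma, and beta is W_Gamma-conjugate to one of them: reflecting
   beta in a simple root of Gamma making an acute angle with it lowers its
   height, until beta becomes simple.  Left translation by the conjugating
   element then transfers the count from that simple root to beta. *)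

Section Dot.
Variables (R : realFieldType) (n : nat).
Implicit Types u v w : 'rV[R]_n.

Lemma dotBl u v w : dot (u - v) w = dot u w - dot v w.
Proof. by rewrite /dot mulmxBl [LHS]mxE [X in _ + X]mxE. Qed.

Lemma dotZl k u w : dot (k *: u) w = k * dot u w.
Proof. by rewrite /dot -scalemxAl [LHS]mxE. Qed.

Lemma dot_suml I (r : seq I) (P : pred I) (F : I -> 'rV[R]_n) w :
  dot (\sum_(i <- r | P i) F i) w = \sum_(i <- r | P i) dot (F i) w.
Proof. by rewrite /dot mulmx_suml summxE. Qed.

Lemma dotC u v : dot u v = dot v u.
Proof. by rewrite /dot -[u *m v^T]trmxK trmx_mul trmxK [in LHS]mxE. Qed.

Lemma dot_gt0 v : v != 0 -> 0 < dot v v.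
Proof.
have sq_ge0 j : true -> 0 <= v 0 j * v^T j 0 by rewrite mxE -expr2 sqr_ge0.
rewrite /dot mxE lt_def sumr_ge0 ?andbT => [|j]; last exact: sq_ge0.
apply: contra => /eqP /(psumr_eq0P sq_ge0) vv0; apply/eqP/rowP => j.
by have /eqP := vv0 j isT; rewrite mxE mulf_eq0 orbb mxE => /eqP.
Qed.

Lemma mul_refl_mx v a : v *m refl_mx a = v - (2 * dot v a / dot a a) *: a.
Proof.
rewrite /refl_mx mulmxBr mulmx1 -scalemxAr mulmxA [v *m a^T]mx11_scalar.
by rewrite mul_scalar_mx scalerA /dot mulrAC.
Qed.

Section Anisotropic.
Variable a : 'rV[R]_n.
Hypothesis a_aniso : dot a a != 0.

Lemma mul_refl_mx_self : a *m refl_mx a = - a.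
Proof. by rewrite mul_refl_mx mulfK // scaler_nat mulr2n opprD addNKr. Qed.

Lemma refl_mxKv v : v *m refl_mx a *m refl_mx a = v.
Proof.
rewrite [v *m _]mul_refl_mx [LHS]mul_refl_mx dotBl dotZl.
set k := 2 * dot v a / dot a a.
have -> : 2 * (dot v a - k * dot a a) / dot a a = - k by rewrite /k; field.
by rewrite scaleNr opprK subrK.
Qed.

Lemma refl_mxK : refl_mx a *m refl_mx a = 1%:M.
Proof.
apply/row_matrixP => i; rewrite row_mul.
have -> : row i (refl_mx a) = row i 1%:M *m refl_mx a.
  by rewrite -row_mul mul1mx.
exact: refl_mxKv.
Qed.

End Anisotropic.
End Dot.

Section ReflectionGroup.
Variables (R : realFieldType) (n : nat) (S : seq 'rV[R]_n).

Lemma gen_refl_mul A B : gen_refl S A -> gen_refl S B -> gen_refl S (A *m B).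
Proof.
move=> SA; elim=> [|a M aS _ SAM]; first by rewrite mulmx1.
by rewrite mulmxA; apply: gen_reflM.
Qed.

Lemma gen_refl_refl a : a \in S -> gen_refl S (refl_mx a).
Proof.
move=> aS; rewrite -[refl_mx a]mul1mx.
by apply: gen_reflM; last exact: gen_refl1.
Qed.

Hypothesis S_aniso : {in S, forall a, dot a a != 0}.

Lemma gen_refl_unitmx M : gen_refl S M -> M \in unitmx.
Proof.
elim=> [|a {}M aS _ M_unit]; first exact: unitmx1.
by rewrite unitmx_mul M_unit (mulmx1_unit (refl_mxK (S_aniso aS))).1.
Qed.

Variable sG : seq 'M[R]_n.
Hypotheses (sG_uniq : uniq sG) (sG_gen : forall M, M \in sG <-> gen_refl S M).

Lemma size_gen_refl_gt0 : (0 < size sG)%N.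
Proof. by have /sG_gen : gen_refl S 1%:M := gen_refl1 S; case: (sG). Qed.

Lemma count_gen_refl_mull N (P : pred 'M[R]_n) :
  gen_refl S N -> count (fun M => P (N *m M)) sG = count P sG.
Proof.
move=> SN; pose mulN (M : 'M[R]_n) := N *m M.
have mulN_inj : injective mulN := can_inj (mulKmx (gen_refl_unitmx SN)).
have NsG_sub : {subset map mulN sG <= sG}.
  by move=> _ /mapP [M /sG_gen SM ->]; apply/sG_gen/gen_refl_mul.
have NsG_uniq : uniq (map mulN sG) by rewrite map_inj_uniq.
have NsG_size : (size sG <= size (map mulN sG))%N by rewrite size_map.
have NsG_eq := (uniq_min_size NsG_uniq NsG_sub NsG_size).2.
by rewrite -[RHS](permP (uniq_perm NsG_uniq sG_uniq NsG_eq)) count_map.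
Qed.

Lemma prob_neg_mul_gen_refl (Phi Delta : seq 'rV[R]_n) a N :
  gen_refl S N -> prob_neg Phi Delta (a *m N) sG = prob_neg Phi Delta a sG.
Proof.
move=> SN; rewrite /prob_neg.
rewrite -(count_gen_refl_mull (fun M => `[< neg_root Phi Delta (a *m M) >]) SN).
by under eq_count do rewrite -mulmxA.
Qed.

End ReflectionGroup.

Section Coordinates.
Variables (R : realFieldType) (n : nat) (Delta : seq 'rV[R]_n).

Lemma exists_dot_gt0_comb (c : 'I_(size Delta) -> nat) v :
  v = \sum_i (c i)%:R *: Delta`_i -> v != 0 ->
  exists i, (0 < c i)%N /\ 0 < dot Delta`_i v.
Proof.
move=> Ev /dot_gt0; rewrite {1}Ev dot_suml => sum_gt0.
have [i ci_dot_gt0] : exists i, 0 < dot ((c i)%:R *: Delta`_i) v.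
  apply/existsP; apply: contraTT sum_gt0 => /existsPn all_le0.
  by rewrite -leNgt sumr_le0 // => i _; rewrite leNgt all_le0.
have ci_gt0 : (0 < c i)%N.
  by rewrite lt0n; apply: contraTneq ci_dot_gt0 => ->; rewrite dotZl mul0r ltxx.
exists i; split => //.
by rewrite -(pmulr_rgt0 _ (_ : 0 < (c i)%:R)) ?ltr0n // -dotZl.
Qed.

Hypothesis Delta_free : free Delta.
Local Notation coefD := (coord (in_tuple Delta)).

Lemma nonneg_int_comb_oppr_eq0 v :
  nonneg_int_comb Delta v -> nonneg_int_comb Delta (- v) -> v = 0.
Proof.
move=> [c ->] [e Ee]; apply: big1 => i _.
have := congr1 (coefD i) Ee; rewrite linearN /= !coord_sum_free //.
move/eqP; rewrite eq_sym -subr_eq0 opprK -natrD pnatr_eq0 addn_eq0.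
by case/andP=> _ /eqP ->; rewrite scale0r.
Qed.

Lemma coord_span_sub_eq0 (Gamma : seq 'rV[R]_n) (i : 'I_(size Delta)) v :
  {subset Gamma <= Delta} -> v \in <<Gamma>>%VS -> Delta`_i \notin Gamma ->
  coefD i v = 0.
Proof.
move=> sub /(@coord_span _ _ _ (in_tuple Gamma)) -> DiG.
rewrite linear_sum big1 // => k _; rewrite linearZ /=.
have /(nthP 0) [j jD Ej] := sub _ (mem_nth 0 (ltn_ord k)).
rewrite -Ej -[j]/(nat_of_ord (Ordinal jD)) coord_free //.
case: eqVneq => [ji | _]; last by rewrite mulr0.
by move: DiG; rewrite -ji /= Ej mem_nth.
Qed.

Lemma comb_span_sub_mem (Gamma : seq 'rV[R]_n) (x : 'I_(size Delta) -> R) i :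
  {subset Gamma <= Delta} -> \sum_j x j *: Delta`_j \in <<Gamma>>%VS ->
  x i != 0 -> Delta`_i \in Gamma.
Proof.
move=> sub xG; apply: contraNT => DiG.
rewrite -(coord_sum_free (X := in_tuple Delta) x i Delta_free).
by rewrite (coord_span_sub_eq0 sub xG).
Qed.

End Coordinates.

Section RootSystem.
Variables (R : realFieldType) (n : nat) (Phi Delta : seq 'rV[R]_n).
Hypothesis Phi_root : is_root_system Phi.
Hypothesis Delta_simple : is_simple_system Phi Delta.

Lemma root_neq0 b : b \in Phi -> b != 0.
Proof. by move=> bP; apply: contraTneq bP => ->; case: Phi_root. Qed.

Lemma root_aniso : {in Phi, forall b, dot b b != 0}.
Proof. by move=> b /root_neq0 /dot_gt0 /lt0r_neq0. Qed.

Lemma root_mul_refl a b : a \in Phi -> b \in Phi -> b *m refl_mx a \in Phi.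
Proof. by case: Phi_root => _ _ Phi_refl _ _; apply: Phi_refl. Qed.

Lemma sub_root_aniso (S : seq 'rV[R]_n) :
  {subset S <= Phi} -> {in S, forall a, dot a a != 0}.
Proof. by move=> sSPhi a /sSPhi /root_aniso. Qed.

Lemma rootN b : b \in Phi -> - b \in Phi.
Proof.
by move=> bP; rewrite -(mul_refl_mx_self (root_aniso bP)) root_mul_refl.
Qed.

Lemma root_mul_gen_refl (S : seq 'rV[R]_n) M b :
  {subset S <= Phi} -> gen_refl S M -> b \in Phi -> b *m M \in Phi.
Proof.
move=> sSPhi SM bP; elim: SM => [|a {}M aS _ bMP]; first by rewrite mulmx1.
by rewrite mulmxA; apply: root_mul_refl => //; apply: sSPhi.
Qed.

Lemma simple_root : {subset Delta <= Phi}.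
Proof. by case: Delta_simple. Qed.

Lemma neg_root_asbool b :
  b \in Phi -> `[< neg_root Phi Delta b >] = ~~ `[< pos_root Phi Delta b >].
Proof.
case: Delta_simple => _ Delta_free Delta_sign bP.
apply/asboolP/asboolPn => [[_ negb] [_ posb] | not_posb].
  have := root_neq0 bP.
  by rewrite (nonneg_int_comb_oppr_eq0 Delta_free posb negb) eqxx.
have [posb | negb] := Delta_sign b bP; first by case: not_posb.
by split; first exact: rootN.
Qed.

Section Enumeration.
Variables (S : seq 'rV[R]_n) (sG : seq 'M[R]_n).
Hypotheses (sSPhi : {subset S <= Phi}) (sG_uniq : uniq sG).
Hypothesis sG_gen : forall M, M \in sG <-> gen_refl S M.

Let S_aniso := sub_root_aniso sSPhi.

Lemma count_neg_root_double a : a \in S ->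
  ((count (fun M => `[< neg_root Phi Delta (a *m M) >]) sG).*2 = size sG)%N.
Proof.
move=> aS; set negp := fun M => _.
pose posp M := `[< pos_root Phi Delta (a *m M) >].
have neg_pos : count negp sG = count posp sG.
  rewrite -(count_gen_refl_mull S_aniso sG_uniq sG_gen _ (gen_refl_refl aS)).
  apply: eq_count => M; rewrite /negp mulmxA mul_refl_mx_self ?S_aniso //.
  by rewrite mulNmx /neg_root opprK.
have neg_Cpos : count negp sG = count (predC posp) sG.
  apply: eq_in_count => M /sG_gen SM.
  by rewrite /negp /= neg_root_asbool // (root_mul_gen_refl sSPhi SM) ?sSPhi.
by rewrite -addnn {1}neg_pos neg_Cpos count_predC.
Qed.

Lemma prob_neg_refl_root a : a \in S -> prob_neg Phi Delta a sG = 2^-1.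
Proof.
move=> aS; have := size_gen_refl_gt0 sG_gen.
rewrite -(count_neg_root_double aS) double_gt0 -(ltr0n R) => /lt0r_neq0 ?.
by rewrite /prob_neg -(count_neg_root_double aS) -muln2 natrM; field.
Qed.

End Enumeration.

Local Notation coefD := (coord (in_tuple Delta)).

Lemma refl_simple_root_descent
    (c : 'I_(size Delta) -> nat) (i : 'I_(size Delta)) beta :
  beta \in Phi -> beta = \sum_j (c j)%:R *: Delta`_j ->
  0 < dot Delta`_i beta ->
  beta = Delta`_i \/
  exists2 e : 'I_(size Delta) -> nat,
    beta *m refl_mx Delta`_i = \sum_j (e j)%:R *: Delta`_j
    & (\sum_j e j < \sum_j c j)%N.
Proof.
case: Delta_simple => _ Delta_free Delta_sign bP Eb dot_gt0_i.
have gP : Delta`_i \in Phi := simple_root (mem_nth 0 (ltn_ord i)).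
set k := 2 * dot beta Delta`_i / dot Delta`_i Delta`_i.
have k_gt0 : 0 < k by rewrite divr_gt0 ?mulr_gt0 ?dot_gt0 ?root_neq0 // dotC.
have coef_refl j :
    coefD j (beta *m refl_mx Delta`_i) = (c j)%:R - k * (i == j)%:R.
  rewrite mul_refl_mx -/k linearB linearZ /= {1}Eb.
  by rewrite coord_sum_free ?coord_free.
have [[e Ee] | [e Ee]] := Delta_sign _ (root_mul_refl gP bP).
  right; exists e => //.
  have coef_e j : (e j)%:R = (c j)%:R - k * (i == j)%:R.
    by rewrite -coef_refl Ee coord_sum_free.
  have sum_delta : \sum_j k * (i == j)%:R = k.
    rewrite (bigD1 i) //= eqxx mulr1 big1 ?addr0 // => j.
    by rewrite eq_sym => /negPf ->; rewrite mulr0.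
  rewrite -(ltr_nat R) !natr_sum (eq_bigr _ (fun j _ => coef_e j)).
  by rewrite sumrB sum_delta ltrBlDr ltrDl.
(* Here -(beta s_i) >= 0 forces all coordinates of beta but the i-th to
   vanish, and reducedness turns beta = c_i Delta_i into beta = Delta_i. *)
left; have c_eq0 j : j != i -> c j = 0.
  move=> ji; have := congr1 (coefD j) Ee.
  rewrite linearN /= coef_refl coord_sum_free // eq_sym (negPf ji) mulr0 subr0.
  move/eqP; rewrite eq_sym -subr_eq0 opprK -natrD pnatr_eq0 addn_eq0.
  by case/andP=> _ /eqP.
have Ebi : beta = (c i)%:R *: Delta`_i.
  by rewrite {1}Eb (bigD1 i) //= big1 ?addr0 // => j /c_eq0 ->; rewrite scale0r.
case: Phi_root => _ _ _ _ /(_ _ (c i)%:R gP).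
rewrite -Ebi => /(_ bP) [ci1 | ciN1].
  by rewrite Ebi ci1 scale1r.
by move: (ler0n R (c i)); rewrite ciN1 ler0N1.
Qed.

Lemma pos_root_span_conj_simple (Gamma : seq 'rV[R]_n) beta :
  {subset Gamma <= Delta} -> pos_root Phi Delta beta -> beta \in <<Gamma>>%VS ->
  exists2 a, a \in Gamma & exists2 N, gen_refl Gamma N & beta = a *m N.
Proof.
have Delta_free : free Delta by case: Delta_simple.
move=> sGD [bP [c Eb]] bG; move: {2}(\sum_i c i).+1 (ltnSn (\sum_i c i)) => h.
elim: h c beta Eb bP bG => [|h IH] c beta Eb bP bG //; rewrite ltnS => c_le.
have [i [ci_gt0 dot_gt0_i]] := exists_dot_gt0_comb Eb (root_neq0 bP).
have DiP : Delta`_i \in Phi := simple_root (mem_nth 0 (ltn_ord i)).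
have DiG : Delta`_i \in Gamma.
  apply: (@comb_span_sub_mem _ _ _ Delta_free _ (fun j => (c j)%:R)) => //.
    by rewrite -Eb.
  by rewrite pnatr_eq0 -lt0n.
have [-> | [e Ee e_lt]] := refl_simple_root_descent bP Eb dot_gt0_i.
  by exists Delta`_i => //; exists 1%:M; [exact: gen_refl1 | rewrite mulmx1].
have b'G : beta *m refl_mx Delta`_i \in <<Gamma>>%VS.
  by rewrite mul_refl_mx memvB ?memvZ ?(memv_span DiG).
have b'P := root_mul_refl DiP bP.
have [a aG [N GN EN]] := IH e _ Ee b'P b'G (leq_trans e_lt c_le).
exists a => //; exists (N *m refl_mx Delta`_i); first exact: gen_reflM.
by rewrite mulmxA -EN refl_mxKv ?root_aniso.
Qed.

End RootSystem.

Theorem corollary3p7 (R : realFieldType) (n : nat)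
  (Phi Delta Gamma : seq 'rV[R]_n) (beta : 'rV[R]_n)
  (sW sWGamma : seq 'M[R]_n) :
  is_root_system Phi ->
  is_simple_system Phi Delta ->
  {subset Gamma <= Delta} ->
  pos_root Phi Delta beta ->
  beta \in <<Gamma>>%VS ->
  uniq sW -> (forall M, M \in sW <-> gen_refl Phi M) ->
  uniq sWGamma -> (forall M, M \in sWGamma <-> gen_refl Gamma M) ->
  prob_neg Phi Delta beta sW = prob_neg Phi Delta beta sWGamma.
Proof.
move=> Phi_root Delta_simple sGD beta_pos bG sW_uniq sW_gen sWG_uniq sWG_gen.
have [bP _] := beta_pos.
have Phi_sub : {subset Phi <= Phi} by [].
have sGPhi : {subset Gamma <= Phi} by move=> a /sGD; apply: simple_root.
have [a aG [N GN Ebeta]] :=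
  pos_root_span_conj_simple Phi_root Delta_simple sGD beta_pos bG.
rewrite (prob_neg_refl_root Phi_root Delta_simple Phi_sub sW_uniq sW_gen bP).
rewrite Ebeta.
have Gamma_aniso := sub_root_aniso Phi_root sGPhi.
rewrite (prob_neg_mul_gen_refl Gamma_aniso sWG_uniq sWG_gen _ _ _ GN).
by rewrite (prob_neg_refl_root Phi_root Delta_simple sGPhi sWG_uniq sWG_gen aG).
Qed.
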